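(* Let $d\le p$ be positive integers, $\mathcal{U}\subset\mathbb{R}^p$ a nonempty closed convex cone, $G$ a real $d\times p$ matrix with $\{Gu:u\in\mathcal{U}\}=\mathbb{R}^d$, and $\kappa\in\mathbb{R}^p$. Let $\mathcal{U}_1=\{u\in\mathcal{U}:|Gu|=1\}$ and $\mathcal{H}(q)=\sup_{u\in\mathcal{U}_1}\{-Gu\cdot q-\kappa\cdot u\}\in(-\infty,\infty]$ for $q\in\mathbb{R}^d$. The following are equivalent: (i) $\mathcal{H}(0)<\infty$; (ii) $\mathcal{H}(q)<\infty$ for some $q\in\mathbb{R}^d$; (iii) $\mathcal{H}(q)<\infty$ for all $q\in\mathbb{R}^d$; (iv) there exists $c_1\in(0,\infty)$ such that $(\kappa\cdot u)^-\le c_1|Gu|$ for all $u\in\mathcal{U}$; (v) the set $\{u\in\mathcal{U}:|Gu|\le\varepsilon,\ \kappa\cdot u\le-1\}$ is empty for all $\varepsilon>0$ sufficiently small.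
   Context: $|\cdot|$ is the Euclidean norm and $x^-=\max(-x,0)$. *)

From HB Require Import structures.
From mathcomp Require Import all_boot all_order all_algebra.
From mathcomp Require Import all_classical all_reals all_analysis.
Set Implicit Arguments. Unset Strict Implicit. Unset Printing Implicit Defensive.
Import Order.TTheory GRing.Theory Num.Theory.
Import numFieldNormedType.Exports.
Local Open Scope classical_set_scope.
Local Open Scope ring_scope.

Definition dotv (R : realType) (n : nat) (x y : 'cV[R]_n) : R :=
  \sum_(i < n) x i 0 * y i 0.

Definition enorm (R : realType) (n : nat) (x : 'cV[R]_n) : R :=
  Num.sqrt (\sum_(i < n) (x i 0) ^+ 2).

Definition negpart (R : realType) (x : R) : R := Num.max (- x) 0.

Definition closed_convex_cone (R : realType) (p : nat) (U : set 'cV[R]_p) : Prop :=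
  [/\ U !=set0, closed U,
      (forall u v, U u -> U v -> forall t : R, 0 <= t <= 1 ->
          U (t *: u + (1 - t) *: v))
    & (forall u, U u -> forall t : R, 0 <= t -> U (t *: u))].

Definition U1 (R : realType) (d p : nat) (U : set 'cV[R]_p) (G : 'M[R]_(d, p))
  : set 'cV[R]_p := [set u | U u /\ enorm (G *m u) = 1].

Definition Ham (R : realType) (d p : nat) (U : set 'cV[R]_p) (G : 'M[R]_(d, p))
  (kappa : 'cV[R]_p) (q : 'cV[R]_d) : \bar R :=
  ereal_sup [set (- dotv (G *m u) q - dotv kappa u)%:E | u in U1 U G].

From HB Require Import structures.
From mathcomp Require Import all_boot all_order all_algebra.
From mathcomp Require Import all_classical all_reals all_analysis.
From mathcomp Require Import ring lra.
Import Order.TTheory GRing.Theory Num.Theory.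
Import numFieldNormedType.Exports.
Local Open Scope classical_set_scope.
Local Open Scope ring_scope.

(* Since U is a cone, H(0) is bounded exactly when -kappa.u grows at most
   linearly in |Gu|: on directions with |Gu| > 0 this is the definition of H(0)
   after normalising u, and on directions of U killed by G one can move a point
   of U_1 arbitrarily far without leaving U_1, which forces kappa.u >= 0 there.
   Changing q changes -Gu.q by at most (1 + |q - q'|^2)/2 on U_1, and the linear
   bound on (kappa.u)^- is a rescaled form of the emptiness of the sets in (v). *)

Set Implicit Arguments.
Unset Strict Implicit.

Section Euclidean.
Variables (R : realType) (n : nat).
Implicit Types (x y z : 'cV[R]_n) (a : R).

Lemma dotvDr x y z : dotv x (y + z) = dotv x y + dotv x z.
Proof. by rewrite /dotv -big_split; apply: eq_bigr => i _; rewrite !mxE mulrDr. Qed.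

Lemma dotvBr x y z : dotv x (y - z) = dotv x y - dotv x z.
Proof. by rewrite /dotv -sumrB; apply: eq_bigr => i _; rewrite !mxE mulrBr. Qed.

Lemma dotvZr x y a : dotv x (a *: y) = a * dotv x y.
Proof. by rewrite /dotv mulr_sumr; apply: eq_bigr => i _; rewrite !mxE mulrCA. Qed.

Lemma dotv0r x : dotv x 0 = 0.
Proof. by rewrite /dotv big1 // => i _; rewrite !mxE mulr0. Qed.

Lemma sum_sqr_ge0 x : 0 <= \sum_(i < n) x i 0 ^+ 2.
Proof. by apply: sumr_ge0 => i _; rewrite sqr_ge0. Qed.

Lemma enorm_ge0 x : 0 <= enorm x.
Proof. exact: sqrtr_ge0. Qed.

Lemma enorm_sqr x : enorm x ^+ 2 = \sum_(i < n) x i 0 ^+ 2.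
Proof. by rewrite sqr_sqrtr // sum_sqr_ge0. Qed.

Lemma enormZ a x : enorm (a *: x) = `|a| * enorm x.
Proof.
rewrite /enorm.
have -> : \sum_(i < n) (a *: x) i 0 ^+ 2 = a ^+ 2 * \sum_(i < n) x i 0 ^+ 2.
  by rewrite mulr_sumr; apply: eq_bigr => i _; rewrite !mxE exprMn.
by rewrite sqrtrM ?sqr_ge0 // sqrtr_sqr.
Qed.

Lemma enorm_eq0 x : enorm x = 0 -> x = 0.
Proof.
move=> /eqP; rewrite sqrtr_eq0 => sum_le0.
have /eqP : \sum_(i < n) x i 0 ^+ 2 = 0.
  by apply/eqP; rewrite eq_le sum_le0 sum_sqr_ge0.
rewrite psumr_eq0 => [/allP x_eq0|i _]; last exact: sqr_ge0.
apply/matrixP => i j; rewrite (ord1 j) mxE.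
by have := x_eq0 i (mem_index_enum _); rewrite /= sqrf_eq0 => /eqP.
Qed.

Lemma dotv_le_enorm x y : 2 * dotv x y <= enorm x ^+ 2 + enorm y ^+ 2.
Proof.
rewrite !enorm_sqr /dotv mulr_sumr -big_split /=; apply: ler_sum => i _.
have := sqr_ge0 (x i 0 - y i 0); lra.
Qed.

End Euclidean.

Lemma cone_addr (R : realType) (p : nat) (U : set 'cV[R]_p) (u v : 'cV[R]_p) :
  closed_convex_cone U -> U u -> U v -> U (u + v).
Proof.
case=> _ _ convU coneU Uu Uv.
have mid : U (2^-1 *: u + (1 - 2^-1) *: v).
  apply: convU => //; apply/andP; split; first by rewrite invr_ge0 ler0n.
  by rewrite invf_le1 ?ler1n // ltr0n.
have half : 1 - 2^-1 = 2^-1 :> R by field.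
rewrite half in mid; have := coneU _ mid 2 (ler0n _ 2).
by rewrite -scalerDr scalerA divff ?pnatr_eq0 // scale1r.
Qed.

Section Hamiltonian.
Variables (R : realType) (d p : nat) (U : set 'cV[R]_p).
Variables (G : 'M[R]_(d, p)) (kappa : 'cV[R]_p).

Lemma Ham_ltyP (q : 'cV[R]_d) :
  (Ham U G kappa q < +oo)%E <->
  exists M : R, forall u, U1 U G u -> - dotv (G *m u) q - dotv kappa u <= M.
Proof.
split=> [Hq|[M HM]]; last first.
  apply: (@le_lt_trans _ _ M%:E); last exact: ltry.
  by apply: ge_ereal_sup => _ [u U1u <-]; rewrite lee_fin; apply: HM.
have ub u : U1 U G u -> ((- dotv (G *m u) q - dotv kappa u)%:E <= Ham U G kappa q)%E.
  by move=> U1u; apply: ereal_sup_ubound; exists u.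
move: Hq ub; case: (Ham U G kappa q) => [r| |] Hq ub.
- by exists r => u /ub; rewrite lee_fin.
- by rewrite ltxx in Hq.
- by exists 0 => u /ub; rewrite leeNy_eq.
Qed.

Lemma Ham_lty_shift (q q' : 'cV[R]_d) :
  (Ham U G kappa q < +oo)%E -> (Ham U G kappa q' < +oo)%E.
Proof.
move=> /Ham_ltyP [M HM]; apply/Ham_ltyP.
exists (M + (1 + enorm (q - q') ^+ 2) / 2) => u U1u.
have := dotv_le_enorm (G *m u) (q - q'); rewrite dotvBr U1u.2 expr1n.
have := HM u U1u; lra.
Qed.

Lemma small_set0_Ham0 :
  (forall u, U u -> forall t : R, 0 <= t -> U (t *: u)) ->
  (exists eps0 : R, 0 < eps0 /\
     forall eps : R, 0 < eps -> eps <= eps0 ->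
       [set u | U u /\ enorm (G *m u) <= eps /\ dotv kappa u <= -1] = set0) ->
  (Ham U G kappa 0 < +oo)%E.
Proof.
move=> coneU [e0 [e0_gt0 small0]]; apply/Ham_ltyP; exists e0^-1 => u U1u.
rewrite dotv0r oppr0 sub0r leNgt; apply/negP => big_k.
set k := dotv kappa u in big_k.
have k_lt0 : k < 0 by have := invr_gt0 e0; rewrite e0_gt0; lra.
pose t := (- k)^-1.
have t_gt0 : 0 < t by rewrite invr_gt0 oppr_gt0.
have tk : t * - k = 1 by rewrite mulVf // lt0r_neq0 // oppr_gt0.
have t_le : t <= e0.
  have e0V : e0^-1 * e0 = 1 by rewrite mulVf // gt_eqF.
  have : 1 < - k * e0 by nra.
  nra.
have := small0 e0 e0_gt0 (lexx _) => /seteqP [/(_ (t *: u)) sub _].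
apply: sub; split; first exact: coneU U1u.1 _ (ltW t_gt0).
split; first by rewrite -scalemxAr enormZ U1u.2 mulr1 ger0_norm // ltW.
by rewrite dotvZr -/k; nra.
Qed.

Lemma negpart_bound_small_set0 :
  (exists c1 : R, 0 < c1 /\
     forall u, U u -> negpart (dotv kappa u) <= c1 * enorm (G *m u)) ->
  exists eps0 : R, 0 < eps0 /\
    forall eps : R, 0 < eps -> eps <= eps0 ->
      [set u | U u /\ enorm (G *m u) <= eps /\ dotv kappa u <= -1] = set0.
Proof.
move=> [c [c_gt0 bound]]; exists (2 * c)^-1; split; first by rewrite invr_gt0; lra.
move=> e e_gt0 e_le; apply/seteqP; split => // u [Uu [small k_le]].
have neg_ge1 : 1 <= negpart (dotv kappa u) by rewrite le_max; apply/orP; left; lra.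
have c_half : c * (2 * c)^-1 = 2^-1 by rewrite invfM mulrCA mulfV ?mulr1 // gt_eqF.
have le1 : c * enorm (G *m u) <= c * e by rewrite ler_wpM2l // ltW.
have le2 : c * e <= c * (2 * c)^-1 by rewrite ler_wpM2l // ltW.
have := bound u Uu; lra.
Qed.

Hypothesis coneU : closed_convex_cone U.

Lemma U1_normalize u : U u -> 0 < enorm (G *m u) -> U1 U G ((enorm (G *m u))^-1 *: u).
Proof.
move=> Uu Gu_gt0; case: coneU => _ _ _ scaleU.
split; first by apply: scaleU; rewrite // invr_ge0 ltW.
by rewrite -scalemxAr enormZ ger0_norm ?invr_ge0 ?ltW // mulVf // gt_eqF.
Qed.

Lemma U1_neq0 : (0 < d)%N -> [set G *m u | u in U] = setT -> U1 U G !=set0.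
Proof.
move=> d_gt0 surjG; pose w : 'cV[R]_d := const_mx 1.
have w_gt0 : 0 < enorm w.
  rewrite /enorm sqrtr_gt0; under eq_bigr do rewrite mxE expr1n.
  by rewrite sumr_const card_ord ltr0n.
have : setT w by [].
rewrite -surjG => -[u Uu Gu].
by exists ((enorm (G *m u))^-1 *: u); apply: U1_normalize; rewrite // Gu.
Qed.

Lemma Ham0_ker_kappa_ge0 u :
  (Ham U G kappa 0 < +oo)%E -> U1 U G !=set0 -> U u -> G *m u = 0 ->
  0 <= dotv kappa u.
Proof.
move=> /Ham_ltyP [M HM] [v U1v] Uu Gu0; rewrite leNgt; apply/negP => k_lt0.
pose t := (`|M + dotv kappa v| + 1) / (- dotv kappa u).
have t_ge0 : 0 <= t.
  by apply: divr_ge0; [have := normr_ge0 (M + dotv kappa v); lra | lra].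
have U1vtu : U1 U G (v + t *: u).
  split; last by rewrite mulmxDr -scalemxAr Gu0 scaler0 addr0; exact: U1v.2.
  by apply: cone_addr U1v.1 _ => //; case: coneU => _ _ _; apply.
have := HM _ U1vtu; rewrite dotv0r dotvDr dotvZr.
have -> : t * dotv kappa u = - (`|M + dotv kappa v| + 1).
  by rewrite /t; field; rewrite ?oppr_eq0 lt_eqF.
have := ler_norm (M + dotv kappa v); lra.
Qed.

Lemma Ham0_negpart_bound :
  (Ham U G kappa 0 < +oo)%E -> U1 U G !=set0 ->
  exists c1 : R, 0 < c1 /\
    forall u, U u -> negpart (dotv kappa u) <= c1 * enorm (G *m u).
Proof.
move=> Ham0 U1_ne; have /Ham_ltyP [M HM] := Ham0.
pose m := Num.max M 0.
have M_le : M <= m by rewrite le_max lexx.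
have m_ge0 : 0 <= m by rewrite le_max lexx orbT.
exists (m + 1); split => [|u Uu]; first lra.
have := enorm_ge0 (G *m u); rewrite le0r => /orP[/eqP Gu0|Gu_gt0].
  have k_ge0 := Ham0_ker_kappa_ge0 Ham0 U1_ne Uu (enorm_eq0 Gu0).
  by rewrite Gu0 mulr0 /negpart ge_max lexx andbT oppr_le0.
set r := enorm (G *m u) in Gu_gt0 *.
have := HM _ (U1_normalize Uu Gu_gt0); rewrite dotv0r dotvZr -/r.
have k_eq : dotv kappa u = r * (r^-1 * dotv kappa u).
  by rewrite mulrA mulfV ?mul1r // gt_eqF.
move: (r^-1 * dotv kappa u) k_eq => k k_eq HMk.
have Nk_le : - k <= m + 1 by lra.
rewrite /negpart ge_max k_eq -mulrN mulrC.
by rewrite ler_wpM2r ?(ltW Gu_gt0) // mulr_ge0 ?(ltW Gu_gt0) //; lra.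
Qed.

End Hamiltonian.

Theorem lemmaA1 (R : realType) (d p : nat) (U : set 'cV[R]_p)
  (G : 'M[R]_(d, p)) (kappa : 'cV[R]_p) :
  (0 < d)%N -> (d <= p)%N ->
  closed_convex_cone U ->
  [set G *m u | u in U] = setT ->
  [<-> (Ham U G kappa 0 < +oo)%E;
       exists q : 'cV[R]_d, (Ham U G kappa q < +oo)%E;
       forall q : 'cV[R]_d, (Ham U G kappa q < +oo)%E;
       exists c1 : R, 0 < c1 /\
         forall u, U u -> negpart (dotv kappa u) <= c1 * enorm (G *m u);
       exists eps0 : R, 0 < eps0 /\
         forall eps : R, 0 < eps -> eps <= eps0 ->
           [set u | U u /\ enorm (G *m u) <= eps /\ dotv kappa u <= -1] = set0].
Proof.
move=> d_gt0 _ coneU surjG.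
have U1_ne := U1_neq0 coneU d_gt0 surjG.
tfae.
- by move=> Ham0; exists 0.
- by move=> [q Hq] q'; exact: Ham_lty_shift Hq.
- by move=> /(_ 0) Ham0; exact: Ham0_negpart_bound coneU Ham0 U1_ne.
- exact: negpart_bound_small_set0.
- by apply: small_set0_Ham0; case: coneU.
Qed.
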